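(* Let $n,k\ge1$, $\mathfrak g=\mathfrak{gl}_n(\mathbb{C})$, $M=V^{\otimes k}\otimes(V^* )^{\otimes k}$ and $e=(\mathrm{id}-p_1)\cdots(\mathrm{id}-p_k)$. Let $0\le r\le k$, let $\underline s=(s_1<\cdots<s_{k-r})$ be a subset of $\{1,\dots,k\}$ of size $k-r$, let $\underline t=(t_1,\dots,t_{k-r})$ be a sequence of $k-r$ distinct elements of $\{1,\dots,k\}$, let $\lambda,\mu$ be partitions of $r$, let $T$ be a standard tableau of shape $\lambda$ with entries in $\{1,\dots,k\}\setminus\underline s$ and $T^*$ a standard tableau of shape $\mu$ with entries in $\{1,\dots,k\}\setminus\underline t$, and set $y=y_Ty_{T^*}c_{\underline s,\underline t}$. If $s_i=t_i$ for some $i\in\{1,\dots,k-r\}$ (i.e. the product $c_{\underline s,\underline t}$ contains a factor $c_{j,j}$), then $ey=0=ye$.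
   Context: $V=\mathbb{C}^n$ (column vectors, standard basis $v_1,\dots,v_n$), $V^*$ row vectors with dual basis $v_1^*,\dots,v_n^*$. For $1\le i,j\le k$ the contraction $c_{i,j}:M\to M$ is $c_{i,j}(u_1\otimes\cdots\otimes u_k\otimes w_1^*\otimes\cdots\otimes w_k^* )=(w_j^*u_i)\sum_{\ell=1}^n(\text{same tensor with }u_i\text{ replaced by }v_\ell\text{ and }w_j^*\text{ replaced by }v_\ell^* )$. Set $p_i=\frac1n c_{i,i}$ and $c_{\underline s,\underline t}=c_{s_1,t_1}c_{s_2,t_2}\cdots c_{s_{k-r},t_{k-r}}$. A standard tableau of shape $\lambda$ with entries in a set $S$ of size $|\lambda|$ is a filling of the Young diagram of $\lambda$ by the elements of $S$, each used once, increasing along rows and down columns. For such $T$, the row group $R_T$ (resp. column group $C_T$) is the set of permutations of $\{1,\dots,k\}$ fixing every element not in $T$ and sending each entry of $T$ to an entry in the same row (resp. column) of $T$, and $y_T=\big(\sum_{\rho\in R_T}\rho\big)\big(\sum_{\gamma\in C_T}\mathrm{sgn}(\gamma)\gamma\big)\in\mathbb{C}S_k$. Here $y_T$ acts on $M$ by place permutations of the $k$ factors of $V^{\otimes k}$ and $y_{T^*}$ by place permutations of the $k$ factors of $(V^* )^{\otimes k}$. *)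

From HB Require Import structures.
From mathcomp Require Import all_boot all_order all_algebra all_fingroup complex.
From mathcomp Require Import Rstruct.
From Stdlib Require Import Reals.
Set Implicit Arguments. Unset Strict Implicit. Unset Printing Implicit Defensive.
Import Order.TTheory GRing.Theory Num.Theory.
Local Open Scope ring_scope.

Definition CC : numClosedFieldType := (Rdefinitions.R)[i].

(* Multi-indices: a : 'I_k -> 'I_n encodes v_{a 1} (x) ... (x) v_{a k}. *)
Definition mindex (n k : nat) := {ffun 'I_k -> 'I_n}.

(* Basis of M = V^{(x)k} (x) (V^* )^{(x)k}: pairs (a, b) standing for
   v_{a 1} (x) ... (x) v_{a k} (x) v*_{b 1} (x) ... (x) v*_{b k}. *)
Definition mbasis (n k : nat) := (mindex n k * mindex n k)%type.

Definition Mspace (n k : nat) := {ffun mbasis n k -> CC}.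

Definition mdelta (n k : nat) (x : mbasis n k) : Mspace n k :=
  [ffun y => (y == x)%:R].

Definition linext (n k : nat) (g : mbasis n k -> Mspace n k) (f : Mspace n k)
  : Mspace n k := \sum_(x : mbasis n k) f x *: g x.

Definition mset (n k : nat) (a : mindex n k) (i : 'I_k) (l : 'I_n) : mindex n k :=
  [ffun j => if j == i then l else a j].

Definition contr (n k : nat) (i j : 'I_k) : Mspace n k -> Mspace n k :=
  linext (fun x : mbasis n k =>
    (x.2 j == x.1 i)%:R *:
      \sum_(l : 'I_n) mdelta ((mset x.1 i l, mset x.2 j l) : mbasis n k)).

Definition pproj (n k : nat) (i : 'I_k) (f : Mspace n k) : Mspace n k :=
  (n%:R)^-1 *: contr i i f.

(* e = (id - p_1) ... (id - p_k)  (composition, p_1 outermost) *)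
Definition eop (n k : nat) : Mspace n k -> Mspace n k :=
  foldr (fun (i : 'I_k) (acc : Mspace n k -> Mspace n k) =>
           fun f => acc f - pproj i (acc f)) (fun f => f) (enum 'I_k).

Definition contr_seq (n k : nat) (s t : seq 'I_k) : Mspace n k -> Mspace n k :=
  foldr (fun (ij : 'I_k * 'I_k) (acc : Mspace n k -> Mspace n k) =>
           fun f => @contr n k ij.1 ij.2 (acc f)) (fun f => f) (zip s t).

(* Place permutation of the k factors of V^{(x)k}:
   u_1 (x) ... (x) u_k |-> u_{sigma^-1 1} (x) ... (x) u_{sigma^-1 k},
   i.e. the basis vector indexed by a goes to the one indexed by a o sigma^-1. *)
Definition permV (n k : nat) (sigma : {perm 'I_k}) : Mspace n k -> Mspace n k :=
  linext (fun x : mbasis n k =>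
    mdelta (([ffun j : 'I_k => x.1 ((sigma^-1)%g j)], x.2) : mbasis n k)).

Definition permVd (n k : nat) (sigma : {perm 'I_k}) : Mspace n k -> Mspace n k :=
  linext (fun x : mbasis n k =>
    mdelta ((x.1, [ffun j : 'I_k => x.2 ((sigma^-1)%g j)]) : mbasis n k)).

Local Close Scope ring_scope.

Definition is_partition (lam : seq nat) (r : nat) : bool :=
  [&& sorted geq lam, all (fun x : nat => 0 < x) lam & sumn lam == r]%N.

(* A tableau is the list of its rows (top to bottom), each row a list of
   entries (left to right). Its shape is the list of row lengths. *)
Definition tableau (k : nat) := seq (seq 'I_k).

Definition shape (k : nat) (T : tableau k) : seq nat := map size T.

Definition entries (k : nat) (T : tableau k) : seq 'I_k := flatten T.

(* numerical value of the entry in row i, column j (0 if absent) *)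
Definition tab_val (k : nat) (T : tableau k) (i j : nat) : nat :=
  nth 0%N (map val (nth [::] T i)) j.

Definition standard_tableau (k : nat) (lam : seq nat) (S : {set 'I_k})
    (T : tableau k) : Prop :=
  [/\ shape T = lam,
      uniq (entries T),
      (forall x : 'I_k, (x \in entries T) = (x \in S)),
      (forall i j : nat, (j.+1 < size (nth [::] T i))%N ->
          (tab_val T i j < tab_val T i j.+1)%N) &
      (forall i j : nat, (j < size (nth [::] T i.+1))%N ->
          (tab_val T i j < tab_val T i.+1 j)%N)].

Definition row_of (k : nat) (T : tableau k) (x : 'I_k) : nat :=
  find (fun row => x \in row) T.
Definition col_of (k : nat) (T : tableau k) (x : 'I_k) : nat :=
  index x (nth [::] T (row_of T x)).

Definition row_group (k : nat) (T : tableau k) : {set {perm 'I_k}} :=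
  [set g : {perm 'I_k} | [forall x : 'I_k,
     if x \in entries T then (g x \in entries T) && (row_of T (g x) == row_of T x)
     else g x == x]].
Definition col_group (k : nat) (T : tableau k) : {set {perm 'I_k}} :=
  [set g : {perm 'I_k} | [forall x : 'I_k,
     if x \in entries T then (g x \in entries T) && (col_of T (g x) == col_of T x)
     else g x == x]].

Local Open Scope ring_scope.
Definition sgnp (k : nat) (g : {perm 'I_k}) : CC := (-1) ^+ odd_perm g.

Definition young_op (n k : nat) (P : {perm 'I_k} -> Mspace n k -> Mspace n k)
    (T : tableau k) (f : Mspace n k) : Mspace n k :=
  \sum_(rho in row_group T) P rho (\sum_(g in col_group T) sgnp g *: P g f).

Definition yV (n k : nat) (T : tableau k) := young_op (@permV n k) T.
Definition yVd (n k : nat) (T : tableau k) := young_op (@permVd n k) T.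

From HB Require Import structures.
From mathcomp Require Import all_boot all_order all_algebra all_fingroup complex.
Set Implicit Arguments. Unset Strict Implicit. Unset Printing Implicit Defensive.
Import Order.TTheory GRing.Theory Num.Theory.
Local Open Scope ring_scope.

(* Let j = s_i = t_i. Apart from the factor c_{j,j} of c_{s,t}, every operator
   in y commutes with the projection p_j = c_{j,j} / n: the other contractions
   c_{a,b} act on other tensor slots (a, b <> j since s and t are injective),
   and the place permutations in y_T, y_{T*} fix j, which lies in neither
   tableau. As c_{j,j} c_{j,j} = n c_{j,j}, this gives p_j y = y = y p_j.
   The p_i pairwise commute, so e = (1 - p_j) e' = e' (1 - p_j), and
   (1 - p_j) p_j = 0 kills both e y and y e. *)

Lemma mem_zip (S T : eqType) (s : seq S) (t : seq T) x y :
  (x, y) \in zip s t -> x \in s /\ y \in t.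
Proof.
elim: s t => [|a s IH] [|b t] //=; rewrite !in_cons => /predU1P[[-> ->]|/IH[xs yt]].
  by rewrite !eqxx.
by rewrite xs yt !orbT.
Qed.

Section Contractions.
Variables n k : nat.
Implicit Types (f : Mspace n k) (x : mbasis n k) (a b : mindex n k).
Implicit Types (G : mbasis n k -> Mspace n k) (sg : {perm 'I_k}).

Lemma mset_at a i l : mset a i l i = l.
Proof. by rewrite ffunE eqxx. Qed.

Lemma mset_neq a i l i' : i' != i -> mset a i l i' = a i'.
Proof. by rewrite ffunE => /negPf->. Qed.

Lemma mset_id a i l m : mset (mset a i m) i l = mset a i l.
Proof. by apply/ffunP => x; rewrite !ffunE; case: (x == i). Qed.

Lemma mset_comm a i i' l l' : i != i' ->
  mset (mset a i l) i' l' = mset (mset a i' l') i l.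
Proof.
move=> ii'; apply/ffunP => x; rewrite !ffunE.
by case: (eqVneq x i') => [->|//]; rewrite eq_sym (negPf ii').
Qed.

Lemma mset_perm a sg i l : sg i = i ->
  [ffun x => mset a i l ((sg^-1)%g x)] = mset [ffun x => a ((sg^-1)%g x)] i l.
Proof.
by move=> sgi; apply/ffunP => x; rewrite !ffunE (canF_eq (permKV sg)) sgi.
Qed.

Lemma linext_is_linear G : linear (linext G).
Proof.
move=> c f g; rewrite /linext scaler_sumr -big_split; apply: eq_bigr => x _.
by rewrite !ffunE scalerDl scalerA.
Qed.

HB.instance Definition _ G := GRing.isLinear.Build CC (Mspace n k) (Mspace n k)
  *:%R (linext G) (linext_is_linear G).

HB.instance Definition _ i i' := GRing.Linear.on (contr i i' : Mspace n k -> Mspace n k).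
HB.instance Definition _ sg := GRing.Linear.on (permV sg : Mspace n k -> Mspace n k).
HB.instance Definition _ sg := GRing.Linear.on (permVd sg : Mspace n k -> Mspace n k).

Lemma linext_mdelta G x : linext G (mdelta x) = G x.
Proof.
rewrite /linext (bigD1 x) // big1 /= => [|y /negPf nyx].
  by rewrite ffunE eqxx scale1r addr0.
by rewrite ffunE nyx scale0r.
Qed.

Lemma eq_linear_mdelta (F1 F2 : {linear Mspace n k -> Mspace n k}) :
  (forall x, F1 (mdelta x) = F2 (mdelta x)) -> F1 =1 F2.
Proof.
move=> eqF f; have -> : f = \sum_x f x *: mdelta x.
  apply/ffunP => y; rewrite sum_ffunE (bigD1 y) // big1 /= => [|x /negPf nxy].
    by rewrite !ffunE eqxx addr0 /= mulr1n [RHS]mulr1.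
  by rewrite !ffunE eq_sym nxy /= scaler0.
by rewrite !linear_sum; apply: eq_bigr => x _; rewrite !linearZ eqF.
Qed.

Lemma contr_mdelta i i' a b : contr i i' (mdelta (a, b)) =
  (b i' == a i)%:R *: \sum_l mdelta ((mset a i l, mset b i' l) : mbasis n k).
Proof. exact: linext_mdelta. Qed.

Lemma permV_mdelta sg a b :
  permV sg (mdelta (a, b)) = mdelta (([ffun x => a ((sg^-1)%g x)], b) : mbasis n k).
Proof. exact: linext_mdelta. Qed.

Lemma permVd_mdelta sg a b :
  permVd sg (mdelta (a, b)) = mdelta ((a, [ffun x => b ((sg^-1)%g x)]) : mbasis n k).
Proof. exact: linext_mdelta. Qed.

Lemma contr2_mdelta i i' l l' a b : i != l -> i' != l' ->
  contr i i' (contr l l' (mdelta (a, b))) =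
  ((b l' == a l) && (b i' == a i))%:R *:
    \sum_m \sum_p mdelta ((mset (mset a l m) i p, mset (mset b l' m) i' p) : mbasis n k).
Proof.
move=> il i'l'; rewrite contr_mdelta linearZ linear_sum -mulnb natrM -scalerA.
congr (_ *: _); rewrite scaler_sumr; apply: eq_bigr => m _.
(* [linear_sum] leaves [contr i i'] hidden behind its linear instance. *)
by rewrite -[LHS]/(contr i i' (mdelta _)) contr_mdelta /= !mset_neq.
Qed.

Lemma contrC i i' l l' f : i != l -> i' != l' ->
  contr i i' (contr l l' f) = contr l l' (contr i i' f).
Proof.
move=> il i'l'; have li : l != i by rewrite eq_sym.
have l'i' : l' != i' by rewrite eq_sym.
apply: (@eq_linear_mdelta (contr i i' \o contr l l') (contr l l' \o contr i i')).
move=> [a b] /=; rewrite (contr2_mdelta _ _ il i'l') (contr2_mdelta _ _ li l'i')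
  andbC exchange_big.
apply: congr1; apply: eq_bigr => p _; apply: eq_bigr => m _.
by rewrite mset_comm // [mset (mset b _ _) _ _]mset_comm.
Qed.

Lemma contrK i i' f : contr i i' (contr i i' f) = n%:R *: contr i i' f.
Proof.
apply: (@eq_linear_mdelta (contr i i' \o contr i i') (( *:%R n%:R) \o contr i i')).
move=> [a b] /=; rewrite contr_mdelta linearZ linear_sum /= scalerA mulrC -scalerA.
apply: congr1; rewrite (eq_bigr (fun=> \sum_p mdelta (mset a i p, mset b i' p))).
  by rewrite sumr_const card_ord scaler_nat.
move=> m _; rewrite -[LHS]/(contr i i' (mdelta _)) contr_mdelta /= !mset_at eqxx scale1r.
by apply: eq_bigr => p _; rewrite !mset_id.
Qed.

Lemma contr_permV sg i i' f : sg i = i ->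
  contr i i' (permV sg f) = permV sg (contr i i' f).
Proof.
move=> sgi; apply: (@eq_linear_mdelta (contr i i' \o permV sg) (permV sg \o contr i i')).
have sgVi : (sg^-1)%g i = i by rewrite -{1}sgi permK.
move=> [a b] /=; rewrite permV_mdelta !contr_mdelta [in RHS]linearZ [in RHS]linear_sum.
rewrite ffunE sgVi; apply: congr1; apply: eq_bigr => l _.
by rewrite -[RHS]/(permV sg (mdelta _)) permV_mdelta mset_perm.
Qed.

Lemma contr_permVd sg i i' f : sg i' = i' ->
  contr i i' (permVd sg f) = permVd sg (contr i i' f).
Proof.
move=> sgi; apply: (@eq_linear_mdelta (contr i i' \o permVd sg) (permVd sg \o contr i i')).
have sgVi : (sg^-1)%g i' = i' by rewrite -{1}sgi permK.
move=> [a b] /=; rewrite permVd_mdelta !contr_mdelta [in RHS]linearZ [in RHS]linear_sum.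
rewrite ffunE sgVi; apply: congr1; apply: eq_bigr => l _.
by rewrite -[RHS]/(permVd sg (mdelta _)) permVd_mdelta mset_perm.
Qed.

Lemma contr_seq_cons (x y : 'I_k) s t f :
  contr_seq (x :: s) (y :: t) f = contr x y (contr_seq s t f).
Proof. by []. Qed.

Lemma contr_seq0 s t : contr_seq s t (0 : Mspace n k) = 0.
Proof. by elim: s t => [[]//=|x s IH [//=|y t]]; rewrite contr_seq_cons IH linear0. Qed.

End Contractions.

Definition eop_seq (n k : nat) (l : seq 'I_k) : Mspace n k -> Mspace n k :=
  foldr (fun (i : 'I_k) (acc : Mspace n k -> Mspace n k) =>
           fun f => acc f - pproj i (acc f)) (fun f => f) l.

Lemma eop_seq_cons n k i l (f : Mspace n k) :
  eop_seq (i :: l) f = eop_seq l f - pproj i (eop_seq l f).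
Proof. by []. Qed.

Section Projection.
Variables n k : nat.
Implicit Types (f : Mspace n k) (sg : {perm 'I_k}).

Lemma pproj_is_linear i : linear (@pproj n k i).
Proof. by move=> c f g; rewrite /pproj linearP scalerDr !scalerA mulrC. Qed.

HB.instance Definition _ i := GRing.isLinear.Build CC (Mspace n k) (Mspace n k)
  *:%R (@pproj n k i) (pproj_is_linear i).

Lemma pprojC i l f : pproj i (pproj l f) = pproj l (pproj i f).
Proof.
have [->//|il] := eqVneq i l.
by rewrite /pproj !linearZ /= contrC // scalerA mulrC -scalerA.
Qed.

Variable j : 'I_k.

Lemma pproj_contrC i i' f : i != j -> i' != j ->
  contr i i' (pproj j f) = pproj j (contr i i' f).
Proof. by move=> ij i'j; rewrite /pproj linearZ /= contrC. Qed.

Lemma pproj_permVC sg f : sg j = j -> permV sg (pproj j f) = pproj j (permV sg f).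
Proof. by move=> sgj; rewrite /pproj linearZ /= contr_permV. Qed.

Lemma pproj_permVdC sg f : sg j = j -> permVd sg (pproj j f) = pproj j (permVd sg f).
Proof. by move=> sgj; rewrite /pproj linearZ /= contr_permVd. Qed.

Lemma pproj_eop_seqC l f : eop_seq l (pproj j f) = pproj j (eop_seq l f).
Proof. by elim: l => [//|i l IH]; rewrite 2!eop_seq_cons IH linearB pprojC. Qed.

Lemma pproj_contr_seqC s t f : j \notin s -> j \notin t ->
  contr_seq s t (pproj j f) = pproj j (contr_seq s t f).
Proof.
elim: s t => [[]//=|x s IH [//=|y t]]; rewrite !in_cons !negb_or => /andP[jx js] /andP[jy jt].
by rewrite 2!contr_seq_cons IH // pproj_contrC // eq_sym.
Qed.

Lemma pproj_eopC f : eop (pproj j f) = pproj j (eop f).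
Proof. exact: pproj_eop_seqC. Qed.

Hypothesis n_neq0 : n%:R != 0 :> CC.

Lemma pproj_contr f : pproj j (contr j j f) = contr j j f.
Proof. by rewrite /pproj contrK scalerA mulVf // scale1r. Qed.

Lemma contr_pproj f : contr j j (pproj j f) = contr j j f.
Proof. by rewrite /pproj linearZ /= contrK scalerA mulVf // scale1r. Qed.

Lemma pproj_idem f : pproj j (pproj j f) = pproj j f.
Proof. by rewrite {1}/pproj contr_pproj. Qed.

Lemma eop_seq_pproj l f : j \in l -> eop_seq l (pproj j f) = 0.
Proof.
elim: l => [//|i l IH]; rewrite eop_seq_cons in_cons.
have [jl _|jNl] := boolP (j \in l); first by rewrite IH // linear0 subr0.
by rewrite orbF => /eqP <-; rewrite pproj_eop_seqC pproj_idem subrr.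
Qed.

Lemma eop_pproj f : eop (pproj j f) = 0.
Proof. exact: eop_seq_pproj (mem_enum _ j). Qed.

Lemma pproj_contr_seq s t f : (j, j) \in zip s t -> uniq s -> uniq t ->
  pproj j (contr_seq s t f) = contr_seq s t f.
Proof.
elim: s t => [[]//=|x s IH [//=|y t]]; rewrite [zip _ _]/= in_cons => /predU1P[[<- <-]|jst].
  by move=> _ _; rewrite contr_seq_cons pproj_contr.
case/mem_zip: (jst) => js jt /andP[xNs us] /andP[yNt ut].
have xj : x != j by apply: contraNneq xNs => ->.
have yj : y != j by apply: contraNneq yNt => ->.
by rewrite contr_seq_cons -pproj_contrC // IH.
Qed.

Lemma contr_seq_pproj s t f : (j, j) \in zip s t -> uniq s -> uniq t ->
  contr_seq s t (pproj j f) = contr_seq s t f.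
Proof.
elim: s t => [[]//=|x s IH [//=|y t]]; rewrite [zip _ _]/= in_cons => /predU1P[[<- <-]|jst].
  by case/andP=> jNs _ /andP[jNt _]; rewrite 2!contr_seq_cons pproj_contr_seqC // contr_pproj.
by case/andP=> _ us /andP[_ ut]; rewrite 2!contr_seq_cons IH.
Qed.

End Projection.

Section Young.
Variables (n k : nat) (P : {perm 'I_k} -> Mspace n k -> Mspace n k) (T : tableau k).

Lemma young_group_fix sg x : x \notin entries T ->
  sg \in row_group T :|: col_group T -> sg x = x.
Proof.
by move=> /negPf xNT /setUP[]; rewrite inE => /forallP/(_ x); rewrite xNT => /eqP.
Qed.

Lemma young_opC (F : {linear Mspace n k -> Mspace n k}) f :
  (forall sg g, sg \in row_group T :|: col_group T -> F (P sg g) = P sg (F g)) ->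
  F (young_op P T f) = young_op P T (F f).
Proof.
move=> FP; rewrite /young_op (linear_sum F); apply: eq_bigr => rho rhoT.
rewrite FP ?(linear_sum F); last by rewrite inE rhoT.
congr (P rho _); apply: eq_bigr => g gT.
by rewrite linearZ FP // inE gT orbT.
Qed.

Lemma young_op0 : (forall sg, P sg 0 = 0) -> young_op P T 0 = 0.
Proof.
move=> P0; rewrite /young_op big1 // => rho _.
by rewrite big1 ?P0 // => g _; rewrite P0 scaler0.
Qed.

End Young.

Theorem lemma1p13 (n k r : nat) (hn : (1 <= n)%N) (hk : (1 <= k)%N)
  (hr : (r <= k)%N)
  (s t : seq 'I_k)
  (hs_size : size s = (k - r)%N)
  (hs_sorted : sorted (fun x y : 'I_k => (val x < val y)%N) s)
  (ht_size : size t = (k - r)%N)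
  (ht_uniq : uniq t)
  (lam mu : seq nat) (hlam : is_partition lam r) (hmu : is_partition mu r)
  (T Tstar : tableau k)
  (hT : standard_tableau lam [set x | x \notin s] T)
  (hTstar : standard_tableau mu [set x | x \notin t] Tstar)
  (hst : exists i : nat, (i < k - r)%N /\
           nth 0%N (map val s) i = nth 0%N (map val t) i) :
  let y := fun f : Mspace n k => yV T (yVd Tstar (@contr_seq n k s t f)) in
  forall f : Mspace n k, @eop n k (y f) = 0 /\ y (@eop n k f) = 0.
Proof.
move=> y f; have n_neq0 : n%:R != 0 :> CC by rewrite pnatr_eq0 -lt0n.
have s_uniq : uniq s.
  by apply: sorted_uniq hs_sorted => [b a c|a]; [apply: ltn_trans | apply: ltnn].
pose x0 := Ordinal hk; case: hst => i [ilt st_i]; pose j := nth x0 s i.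
have jst : (j, j) \in zip s t.
  have ti : nth x0 t i = j.
    by apply: val_inj; rewrite -!(nth_map x0 0%N) ?hs_size ?ht_size.
  by rewrite -{2}ti -nth_zip ?mem_nth ?size_zip ?hs_size ?ht_size ?minnn.
have [js jt] := mem_zip jst.
have jNT : j \notin entries T by case: hT => _ _ -> _ _; rewrite inE js.
have jNTstar : j \notin entries Tstar by case: hTstar => _ _ -> _ _; rewrite inE jt.
have pproj_yC (g : Mspace n k) : pproj j (yV T (yVd Tstar g)) = yV T (yVd Tstar (pproj j g)).
  rewrite young_opC => [|sg h /(young_group_fix jNT) sgj]; last exact/esym/pproj_permVC.
  by rewrite young_opC // => sg h /(young_group_fix jNTstar) sgj; exact/esym/pproj_permVdC.
split.
  by rewrite /y -(pproj_contr_seq _ _ jst) // -pproj_yC eop_pproj.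
rewrite /y -(contr_seq_pproj _ _ jst) // -pproj_eopC eop_pproj // contr_seq0.
rewrite /yVd young_op0 => [|sg]; last exact: linear0.
by rewrite /yV young_op0 // => sg; exact: linear0.
Qed.
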